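(* Let $n\ge1$, let $V=\bigoplus_{i=1}^{2n-1}V_i$ and $W=\bigoplus_{i=1}^{2n-1}W_i$ be arbitrary graded finite-dimensional complex vector spaces, and let $(B_h,\Gamma_i,\Delta_i)\in\Lambda^{\mathrm A_{2n-1}}(V,W)$. Define $A,B\in\mathrm{End}(V)$, $\Gamma\in\mathrm{Hom}(W,V)$, $\Delta\in\mathrm{Hom}(V,W)$ by $A=\bigoplus_{i=1}^{2n-2}B_{i+1,i}$, $B=\bigoplus_{i=1}^{2n-2}\epsilon_iB_{i,i+1}$ with $\epsilon_i=+1$ for $i<n$ and $\epsilon_i=-1$ for $i\ge n$, $\Gamma=\bigoplus_i\Gamma_i$, $\Delta=\bigoplus_i\Delta_i$. Then the elements \[X(z)=\mathrm{id}_W-\sum_{j,k\ge0}\Delta A^jB^k\Gamma\,z^{j+k+2},\qquad Y(z)=\mathrm{id}_W+\sum_{j,k\ge0}\Delta B^kA^j\Gamma\,z^{j+k+2}\] of $\mathrm{End}(W)[z]$ are inverse to each other.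
   Context: $B_{i,j}$ ($|i-j|=1$) denotes a linear map $V_j\to V_i$, $\Gamma_i:W_i\to V_i$, $\Delta_i:V_i\to W_i$. $\Lambda^{\mathrm A_{2n-1}}(V,W)$ is the set of tuples $(B_{i,j},\Gamma_i,\Delta_i)$ satisfying, with the conventions that $B_{0,1},B_{1,0},B_{2n,2n-1},B_{2n-1,2n}$ are zero: $B_{i,i+1}B_{i+1,i}-B_{i,i-1}B_{i-1,i}=\Gamma_i\Delta_i$ for $1\le i\le n-1$; $-B_{n,n-1}B_{n-1,n}-B_{n,n+1}B_{n+1,n}=\Gamma_n\Delta_n$; and $B_{i,i-1}B_{i-1,i}-B_{i,i+1}B_{i+1,i}=\Gamma_i\Delta_i$ for $n+1\le i\le 2n-1$. (These are the preprojective relations for the type $\mathrm A_{2n-1}$ quiver oriented towards the middle vertex $n$.) *)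

From HB Require Import structures.
From mathcomp Require Import all_boot all_order all_algebra.
From mathcomp Require Import complex reals.
Set Implicit Arguments.
Unset Strict Implicit.
Unset Printing Implicit Defensive.
Import GRing.Theory.
Local Open Scope ring_scope.

(* Conventions (1-based vertex indices 1..2n-1 of the A_{2n-1} quiver):
   V_i = F^(v i), W_i = F^(w i); linear maps are matrices acting on column
   vectors, so a map V_j -> V_i is a matrix of size (v i) x (v j).
     Bup i = B_{i,i+1} : V_{i+1} -> V_i
     Bdn i = B_{i+1,i} : V_i -> V_{i+1}
     Gam i = Gamma_i   : W_i -> V_i
     Del i = Delta_i   : V_i -> W_i
   Values of these families at indices outside the quiver are never used. *)
Section A2n1.
Variables (F : fieldType) (n : nat) (v w : nat -> nat).
Variables (Bup : forall i, 'M[F]_(v i, v i.+1))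
          (Bdn : forall i, 'M[F]_(v i.+1, v i))
          (Gam : forall i, 'M[F]_(v i, w i))
          (Del : forall i, 'M[F]_(w i, v i)).

Definition nvert : nat := (2 * n).-1.

(* B_{i,i-1} B_{i-1,i}, with B_{1,0} = B_{0,1} = 0 *)
Definition Lterm (i : nat) : 'M[F]_(v i) :=
  match i as j return 'M[F]_(v j) with
  | 0 => 0
  | k.+1 => if k is 0 then 0 else Bdn k *m Bup k
  end.

(* B_{i,i+1} B_{i+1,i}, with B_{2n-1,2n} = B_{2n,2n-1} = 0 *)
Definition Rterm (i : nat) : 'M[F]_(v i) :=
  if (i < nvert)%N then Bup i *m Bdn i else 0.

Definition in_Lambda : Prop :=
  forall i : nat, (1 <= i <= nvert)%N ->
    Gam i *m Del i =
      (if (i < n)%N then Rterm i - Lterm i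
       else if i == n then - Lterm i - Rterm i
       else Lterm i - Rterm i).

Definition Ablk (i j : nat) : 'M[F]_(v i, v j) :=
  if (i =P j.+1) is ReflectT e then castmx (congr1 v (esym e), erefl) (Bdn j)
  else 0.

Definition eps (i : nat) : F := if (i < n)%N then 1 else -1.

Definition Bblk (i j : nat) : 'M[F]_(v i, v j) :=
  if (j =P i.+1) is ReflectT e then
    castmx (erefl, congr1 v (esym e)) (eps i *: Bup i)
  else 0.

Definition Gblk (i j : nat) : 'M[F]_(v i, w j) :=
  if (j =P i) is ReflectT e then castmx (erefl, congr1 w (esym e)) (Gam i)
  else 0.

Definition Dblk (i j : nat) : 'M[F]_(w i, v j) :=
  if (j =P i) is ReflectT e then castmx (erefl, congr1 v (esym e)) (Del i)
  else 0.

Definition dimV : nat := (\sum_(i < nvert) v i.+1)%N.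
Definition dimW : nat := (\sum_(i < nvert) w i.+1)%N.

Definition bigA : 'M[F]_dimV :=
  @mxblock F nvert nvert (fun i => v i.+1) (fun j => v j.+1)
    (fun i j => Ablk i.+1 j.+1).
Definition bigB : 'M[F]_dimV :=
  @mxblock F nvert nvert (fun i => v i.+1) (fun j => v j.+1)
    (fun i j => Bblk i.+1 j.+1).
Definition bigG : 'M[F]_(dimV, dimW) :=
  @mxblock F nvert nvert (fun i => v i.+1) (fun j => w j.+1)
    (fun i j => Gblk i.+1 j.+1).
Definition bigD : 'M[F]_(dimW, dimV) :=
  @mxblock F nvert nvert (fun i => w i.+1) (fun j => v j.+1)
    (fun i j => Dblk i.+1 j.+1).

(* End(W)[z] is identified with 'M[{poly F}]_dimW.  The sums over j,k >= 0
   are truncated at 2n-1, since A^(2n-1) = B^(2n-1) = 0 (A raises and B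
   lowers the grading), so all omitted terms vanish. *)
Definition Xz : 'M[{poly F}]_dimW :=
  1 - \sum_(j < nvert) \sum_(k < nvert)
        ('X^(j + k + 2) *: map_mx polyC (bigD *m bigA ^+ j *m bigB ^+ k *m bigG)).

Definition Yz : 'M[{poly F}]_dimW :=
  1 + \sum_(j < nvert) \sum_(k < nvert)
        ('X^(j + k + 2) *: map_mx polyC (bigD *m bigB ^+ k *m bigA ^+ j *m bigG)).

End A2n1.

(* Grading V so that A raises and B lowers the degree makes both nilpotent,
   so P := (1 - A)^-1 (1 - B)^-1 = sum_(j,k) A^j B^k and
   Q := (1 - B)^-1 (1 - A)^-1 = sum_(j,k) B^k A^j are finite sums.  With the
   signs eps_i, the preprojective relations say exactly BA - AB = Gamma Delta,
   hence Q - P = P (BA - AB) Q = P Gamma Delta Q, and symmetrically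
   Q - P = Q Gamma Delta P.  Pushing these through Delta _ Gamma gives
   (1 - Delta P Gamma)(1 + Delta Q Gamma) = 1 = (1 + Delta Q Gamma)(1 - Delta P Gamma).
   The variable z is absorbed by replacing A, B by zA, zB and Gamma by z^2 Gamma. *)

From HB Require Import structures.
From mathcomp Require Import all_boot all_order all_algebra.
From mathcomp Require Import complex reals.
From mathcomp Require Import zify.
Set Implicit Arguments.
Unset Strict Implicit.
Unset Printing Implicit Defensive.
Import GRing.Theory.
Local Open Scope ring_scope.

Section RingIdentities.
Variable R : pzRingType.

Lemma nilpotent_geometric_sum_inverse (a : R) N : a ^+ N = 0 ->
  (1 - a) * (\sum_(j < N) a ^+ j) = 1 /\ (\sum_(j < N) a ^+ j) * (1 - a) = 1.
Proof.
move=> aN; have left_inv : (1 - a) * (\sum_(j < N) a ^+ j) = 1.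
  by rewrite -opprB mulNr -subrX1 aN sub0r opprK.
split=> //; rewrite -[RHS]left_inv; apply/commr_sym/commr_sum => j _.
by apply: commr_sym; apply: commrB; [exact: commr1 | exact/commr_sym/commrX].
Qed.

(* With x' = x^-1 and y' = y^-1, this is (xy)^-1 - (yx)^-1 written in the two
   ways the difference of inverses factors. *)
Lemma inverse_difference (x y x' y' : R) :
  x * x' = 1 -> x' * x = 1 -> y * y' = 1 -> y' * y = 1 ->
  y' * x' - x' * y' = x' * y' * (y * x - x * y) * (y' * x') /\
  y' * x' - x' * y' = y' * x' * (y * x - x * y) * (x' * y').
Proof.
move=> xx' x'x yy' y'y; rewrite !(mulrBr, mulrBl) !mulrA; split.
- rewrite -(mulrA x' y' y) y'y mulr1 x'x mul1r.
  by rewrite -(mulrA _ y y') yy' mulr1 -(mulrA _ x x') xx' mulr1.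
- rewrite -(mulrA _ x x') xx' mulr1 -(mulrA _ y y') yy' mulr1.
  by rewrite -(mulrA y' x' x) x'x mulr1 y'y mul1r.
Qed.

Lemma commutator_one_sub (x y : R) :
  (1 - y) * (1 - x) - (1 - x) * (1 - y) = y * x - x * y.
Proof.
have expand (z t : R) : (1 - z) * (1 - t) = 1 - z - t + z * t.
  by rewrite mulrBl !mulrBr !mul1r !mulr1 opprB addrA addrAC (addrAC 1).
by rewrite !expand (addrAC 1 (- y)) opprD addrACA subrr add0r.
Qed.

End RingIdentities.

Section PushThrough.
Variables (T : pzRingType) (m k : nat) (g : 'M[T]_(m, k)) (d : 'M[T]_(k, m)).

Lemma push_through_mulBD (p q : 'M[T]_m) : q - p = p *m g *m d *m q ->
  (1 - d *m p *m g) * (1 + d *m q *m g) = 1.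
Proof.
move=> qp; have pq : (d *m p *m g) * (d *m q *m g) = d *m q *m g - d *m p *m g.
  by rewrite -mulmxE -mulmxBl -mulmxBr qp !mulmxA.
by rewrite mulrBl !mulrDr !mul1r mulr1 pq (addrC (d *m p *m g)) subrK addrK.
Qed.

Lemma push_through_mulDB (p q : 'M[T]_m) : q - p = q *m g *m d *m p ->
  (1 + d *m q *m g) * (1 - d *m p *m g) = 1.
Proof.
move=> qp; have qp' : (d *m q *m g) * (d *m p *m g) = d *m q *m g - d *m p *m g.
  by rewrite -mulmxE -mulmxBl -mulmxBr qp !mulmxA.
by rewrite mulrDl !mulrBr !mul1r mulr1 qp' opprB (addrC (d *m q *m g)) !subrK.
Qed.

Lemma nilpotent_commutator_inverse (a b : 'M[T]_m) N :
  a ^+ N = 0 -> b ^+ N = 0 -> b * a - a * b = g *m d ->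
  let X := 1 - \sum_(i < N) \sum_(j < N) d *m (a ^+ i * b ^+ j) *m g in
  let Y := 1 + \sum_(i < N) \sum_(j < N) d *m (b ^+ j * a ^+ i) *m g in
  X * Y = 1 /\ Y * X = 1.
Proof.
move=> aN bN gd X Y.
set Sa := \sum_(i < N) a ^+ i; set Sb := \sum_(j < N) b ^+ j.
have [aSa Saa] := nilpotent_geometric_sum_inverse aN.
have [bSb Sbb] := nilpotent_geometric_sum_inverse bN.
have sum_push (c e : 'M[T]_m) :
  \sum_(i < N) \sum_(j < N) d *m (c ^+ i * e ^+ j) *m g =
  d *m ((\sum_(i < N) c ^+ i) * (\sum_(j < N) e ^+ j)) *m g.
  rewrite mulr_suml mulmx_sumr mulmx_suml; apply: eq_bigr => i _.
  by rewrite mulr_sumr mulmx_sumr mulmx_suml.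
have -> : X = 1 - d *m (Sa * Sb) *m g by rewrite /X sum_push.
have -> : Y = 1 + d *m (Sb * Sa) *m g.
  by rewrite /Y exchange_big /= sum_push.
have [qp_left qp_right] := inverse_difference aSa Saa bSb Sbb.
rewrite (commutator_one_sub a b) gd in qp_left qp_right.
split; [apply: push_through_mulBD | apply: push_through_mulDB].
  by rewrite qp_left -!mulmxE !mulmxA.
by rewrite qp_right -!mulmxE !mulmxA.
Qed.

End PushThrough.

Section BlockNilpotent.
Variables (T : pzSemiRingType) (N : nat) (p_ : 'I_N -> nat) (h : 'I_N -> nat).
Variable M : 'M[T]_(\sum_i p_ i).
Hypothesis M_raises_h : forall i j, (h i <= h j)%N -> submxblock M i j = 0.

Lemma submxblock_exp_eq0 k i j :
  (h i <= h j + k)%N -> submxblock (M ^+ k.+1) i j = 0.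
Proof.
elim: k i j => [|k IH] i j hij; first by rewrite expr1 M_raises_h // -(addn0 (h j)).
rewrite exprSr -mulmxE -[M ^+ k.+1]submxblockK -[M in _ *m M]submxblockK.
rewrite mul_mxblock mxblockK big1 // => l _.
have [hlj | hjl] := leqP (h l) (h j); first by rewrite M_raises_h ?mulmx0.
by rewrite IH ?mul0mx //; lia.
Qed.

Lemma mxblock_nilpotent K : (forall i, (h i < K)%N) -> M ^+ K = 0.
Proof.
move=> hK; apply/mxblockP => i j; rewrite submxblock0.
case: K hK => [/(_ i)//|K] hK; apply: submxblock_exp_eq0.
by have := hK i; lia.
Qed.

End BlockNilpotent.

Section Quiver.
Variables (F : fieldType) (n : nat) (v w : nat -> nat).
Variables (Bup : forall i, 'M[F]_(v i, v i.+1))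
          (Bdn : forall i, 'M[F]_(v i.+1, v i))
          (Gam : forall i, 'M[F]_(v i, w i))
          (Del : forall i, 'M[F]_(w i, v i)).

Local Notation N := (nvert n).

Lemma Ablk_succ j : Ablk Bdn j.+1 j = Bdn j.
Proof. by rewrite /Ablk; case: eqP => [e|[]//]; rewrite castmx_id. Qed.

Lemma Ablk_eq0 i j : i != j.+1 -> Ablk Bdn i j = 0.
Proof. by rewrite /Ablk; case: eqP. Qed.

Lemma Bblk_succ i : Bblk n Bup i i.+1 = eps F n i *: Bup i.
Proof. by rewrite /Bblk; case: eqP => [e|[]//]; rewrite castmx_id. Qed.

Lemma Bblk_eq0 i j : j != i.+1 -> Bblk n Bup i j = 0.
Proof. by rewrite /Bblk; case: eqP. Qed.

Lemma Gblk_diag i : Gblk Gam i i = Gam i.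
Proof. by rewrite /Gblk; case: eqP => [e|[]//]; rewrite castmx_id. Qed.

Lemma Gblk_eq0 i j : j != i -> Gblk Gam i j = 0.
Proof. by rewrite /Gblk; case: eqP. Qed.

Lemma Dblk_diag i : Dblk Del i i = Del i.
Proof. by rewrite /Dblk; case: eqP => [e|[]//]; rewrite castmx_id. Qed.

Lemma Dblk_eq0 i j : j != i -> Dblk Del i j = 0.
Proof. by rewrite /Dblk; case: eqP. Qed.

Lemma block_BA_diag (i : 'I_N) :
  \sum_(j < N) Bblk n Bup i.+1 j.+1 *m Ablk Bdn j.+1 i.+1 =
  eps F n i.+1 *: Rterm n Bup Bdn i.+1.
Proof.
rewrite /Rterm; case: ltnP => [lt_iN | le_Ni].
  rewrite (big_only1 (Ordinal lt_iN)) //= ?Bblk_succ ?Ablk_succ ?scalemxAl // => j ne _.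
  by rewrite Bblk_eq0 ?mul0mx.
rewrite scaler0 big1 // => j _; rewrite Bblk_eq0 ?mul0mx //.
by rewrite eqSS neq_ltn (leq_trans (ltn_ord j) le_Ni).
Qed.

Lemma block_AB_diag (i : 'I_N) :
  \sum_(j < N) Ablk Bdn i.+1 j.+1 *m Bblk n Bup j.+1 i.+1 =
  eps F n i *: Lterm Bup Bdn i.+1.
Proof.
case: i => [[|i] lt_iN] /=; first by rewrite scaler0 big1 // => j _; rewrite Ablk_eq0 ?mul0mx.
rewrite (big_only1 (Ordinal (ltnW lt_iN))) //= ?Bblk_succ ?Ablk_succ ?scalemxAr // => j ne _.
by rewrite Ablk_eq0 ?mul0mx // eqSS eq_sym.
Qed.

Lemma block_GD_diag (i : 'I_N) :
  \sum_(j < N) Gblk Gam i.+1 j.+1 *m Dblk Del j.+1 i.+1 = Gam i.+1 *m Del i.+1.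
Proof.
rewrite (big_only1 i) //= ?Gblk_diag ?Dblk_diag // => j ne _.
by rewrite Gblk_eq0 ?mul0mx.
Qed.

Lemma bigB_bigA_commutator : in_Lambda n Bup Bdn Gam Del ->
  bigB n Bup *m bigA n Bdn - bigA n Bdn *m bigB n Bup = bigG n Gam *m bigD n Del.
Proof.
move=> Lambda; rewrite /bigA /bigB /bigG /bigD !mul_mxblock -mxblockB.
apply: eq_mxblock => i k; case: (eqVneq i k) => [<-|ne_ik].
  rewrite block_BA_diag block_AB_diag block_GD_diag Lambda ?ltnS ?ltn_ord // /eps.
  case: (ltnP i.+1 n) => [lt_in | le_ni]; first by rewrite ltnW // !scale1r.
  case: eqP => [e | ne]; first by rewrite (_ : i < n)%N ?scaleN1r ?scale1r 1?addrC //; lia.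
  by rewrite ltnNge (_ : n <= i)%N ?scaleN1r ?opprK 1?addrC //; lia.
have {}ne_ik : (i != k :> nat) := ne_ik.
rewrite !big1 ?subr0 // => j _.
- case: (eqVneq j.+1 i.+1) => [e|ne]; last by rewrite Gblk_eq0 ?mul0mx.
  by rewrite Dblk_eq0 ?mulmx0 //; lia.
- case: (eqVneq i.+1 j.+2) => [e|ne]; last by rewrite Ablk_eq0 ?mul0mx.
  by rewrite Bblk_eq0 ?mulmx0 //; lia.
- case: (eqVneq j.+1 i.+2) => [e|ne]; last by rewrite Bblk_eq0 ?mul0mx.
  by rewrite Ablk_eq0 ?mulmx0 //; lia.
Qed.

Lemma bigA_nilpotent : bigA n Bdn ^+ N = 0.
Proof.
apply: (@mxblock_nilpotent _ _ _ (fun i => nat_of_ord i)) => [i j le_ij|i //].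
by rewrite mxblockK Ablk_eq0 //; lia.
Qed.

Lemma bigB_nilpotent : bigB n Bup ^+ N = 0.
Proof.
apply: (@mxblock_nilpotent _ _ _ (fun i => N - i.+1)%N) => [i j le_ij|i].
  by rewrite mxblockK Bblk_eq0 //; have := ltn_ord i; have := ltn_ord j; lia.
by have := ltn_ord i; lia.
Qed.

End Quiver.

(* [exprZn] needs a [semiAlgType], which ['M_m] is only when [m] is a successor. *)
Lemma exprZn_mx (T : comPzRingType) m (c : T) (A : 'M[T]_m) k :
  (c *: A) ^+ k = c ^+ k *: A ^+ k.
Proof.
elim: k => [|k IH]; first by rewrite !expr0 scale1r.
by rewrite !exprSr IH -!mulmxE -scalemxAl -scalemxAr scalerA.
Qed.

Lemma commutator_scale (T : comPzRingType) m (c : T) (A B : 'M[T]_m) :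
  (c *: B) *m (c *: A) - (c *: A) *m (c *: B) = c ^+ 2 *: (B *m A - A *m B).
Proof. by rewrite -!scalemxAl -!scalemxAr !scalerA -expr2 scalerBr. Qed.

Lemma scale_exp_mulmx (T : comPzRingType) m k (c : T) (A B : 'M[T]_m)
    (G : 'M[T]_(m, k)) (D : 'M[T]_(k, m)) i j :
  c ^+ (i + j + 2) *: (D *m A ^+ i *m B ^+ j *m G) =
  D *m ((c *: A) ^+ i * (c *: B) ^+ j) *m (c ^+ 2 *: G).
Proof.
rewrite !exprZn_mx -mulmxE -(scalemxAl (c ^+ i)) -(scalemxAr (c ^+ j)) scalerA.
rewrite -(scalemxAr (c ^+ i * c ^+ j)) -(scalemxAl (c ^+ i * c ^+ j)).
by rewrite -(scalemxAr (c ^+ 2)) scalerA -!exprD !mulmxA.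
Qed.

Section Lambda.
Variables (F : fieldType) (n : nat) (v w : nat -> nat).
Variables (Bup : forall i, 'M[F]_(v i, v i.+1))
          (Bdn : forall i, 'M[F]_(v i.+1, v i))
          (Gam : forall i, 'M[F]_(v i, w i))
          (Del : forall i, 'M[F]_(w i, v i)).

Local Notation polyM := (map_mx (@polyC F)).

Theorem Xz_Yz_inverse : in_Lambda n Bup Bdn Gam Del ->
  Xz n Bup Bdn Gam Del * Yz n Bup Bdn Gam Del = 1 /\
  Yz n Bup Bdn Gam Del * Xz n Bup Bdn Gam Del = 1.
Proof.
move=> Lambda.
pose a := 'X *: polyM (bigA n Bdn); pose b := 'X *: polyM (bigB n Bup).
pose g := 'X ^+ 2 *: polyM (bigG n Gam); pose d := polyM (bigD n Del).
have a_nil : a ^+ nvert n = 0 by rewrite exprZn_mx -rmorphXn bigA_nilpotent rmorph0 scaler0.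
have b_nil : b ^+ nvert n = 0 by rewrite exprZn_mx -rmorphXn bigB_nilpotent rmorph0 scaler0.
have ba_ab : b * a - a * b = g *m d.
  rewrite /a /b /g /d -!mulmxE commutator_scale -!map_mxM -map_mxB.
  by rewrite (bigB_bigA_commutator Lambda) map_mxM scalemxAl.
have -> : Xz n Bup Bdn Gam Del =
    1 - \sum_(i < nvert n) \sum_(j < nvert n) d *m (a ^+ i * b ^+ j) *m g.
  by congr (_ - _); apply: eq_bigr => i _; apply: eq_bigr => j _;
     rewrite !map_mxM !rmorphXn scale_exp_mulmx.
have -> : Yz n Bup Bdn Gam Del =
    1 + \sum_(i < nvert n) \sum_(j < nvert n) d *m (b ^+ j * a ^+ i) *m g.
  by congr (_ + _); apply: eq_bigr => i _; apply: eq_bigr => j _;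
     rewrite !map_mxM !rmorphXn (addnC i j) scale_exp_mulmx.
exact: nilpotent_commutator_inverse a_nil b_nil ba_ab.
Qed.

End Lambda.

Theorem lemma4p10 (R : realType) (n : nat) (hn : (1 <= n)%N)
  (v w : nat -> nat)
  (Bup : forall i, 'M[R[i]]_(v i, v i.+1))
  (Bdn : forall i, 'M[R[i]]_(v i.+1, v i))
  (Gam : forall i, 'M[R[i]]_(v i, w i))
  (Del : forall i, 'M[R[i]]_(w i, v i)) :
  in_Lambda n Bup Bdn Gam Del ->
  Xz n Bup Bdn Gam Del * Yz n Bup Bdn Gam Del = 1 /\
  Yz n Bup Bdn Gam Del * Xz n Bup Bdn Gam Del = 1.
Proof. exact: Xz_Yz_inverse. Qed.
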